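(* Let $R$ be a ring of finite characteristic and $J$ a nil ideal of $R$ of bounded index. Then the following are equivalent: (1) $R$ is an $n$-torsion clean ring for some $n\in\mathbb{N}$; (2) $R/J$ is a $t$-torsion clean ring for some $t\in\mathbb{N}$.
   Context: All rings are associative with identity. An ideal $I$ is nil of bounded index if there is $k$ with $r^k=0$ for all $r\in I$. A ring $R$ is $n$-torsion clean if every $r\in R$ can be written $r=e+u$ with $e^2=e$, $u$ a unit, $u^n=1$, and $n$ is the smallest natural number with this property. *)

From HB Require Import structures.
From mathcomp Require Import all_boot all_algebra generic_quotient.
Set Implicit Arguments. Unset Strict Implicit. Unset Printing Implicit Defensive.
Import GRing.Theory.
Local Open Scope ring_scope.
Local Open Scope quotient_scope.

Record tsIdeal (R : pzRingType) := TSIdeal {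
  tsI :> zmodClosed R;
  tsI_mull : forall a x, x \in tsI -> a * x \in tsI;
  tsI_mulr : forall a x, x \in tsI -> x * a \in tsI }.

Section TwoSidedQuotient.
Variables (R : pzRingType) (J : tsIdeal R).

Definition rq_equiv (x y : R) := (x - y) \in tsI J.

Lemma rq_equiv_is_equiv : equiv_class_of rq_equiv.
Proof.
split=> [x|x y|y x z]; rewrite /rq_equiv ?subrr ?rpred0 //.
  by apply/idP/idP => h; rewrite -opprB rpredN.
by move=> *; rewrite -[x](addrNK y) -addrA rpredD.
Qed.

Canonical rq_equiv_equiv := EquivRelPack rq_equiv_is_equiv.
Canonical rq_equiv_encModRel := defaultEncModRel rq_equiv.

Definition rquot := {eq_quot rq_equiv}.
HB.instance Definition _ : EqQuotient R rq_equiv rquot := EqQuotient.on rquot.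
HB.instance Definition _ := Choice.on rquot.

Lemma rq_equivE (x y : R) : (x == y %[mod rquot]) = (x - y \in tsI J).
Proof. by rewrite piE. Qed.

Definition rq_zero : rquot := lift_cst rquot 0.
Definition rq_add := lift_op2 rquot +%R.
Definition rq_opp := lift_op1 rquot -%R.
Canonical rq_pi_zero_morph := PiConst rq_zero.

Lemma rq_pi_opp : {morph \pi_rquot : x / - x >-> rq_opp x}.
Proof.
move=> x; unlock rq_opp; apply/eqP; rewrite rq_equivE.
have h : x - repr (\pi_rquot x) \in tsI J by rewrite -rq_equivE reprK.
by rewrite -opprD rpredN.
Qed.
Canonical rq_pi_opp_morph := PiMorph1 rq_pi_opp.

Lemma rq_pi_add : {morph \pi_rquot : x y / x + y >-> rq_add x y}.
Proof.
move=> x y; unlock rq_add; apply/eqP; rewrite rq_equivE.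
have hx : x - repr (\pi_rquot x) \in tsI J by rewrite -rq_equivE reprK.
have hy : y - repr (\pi_rquot y) \in tsI J by rewrite -rq_equivE reprK.
by rewrite opprD addrACA rpredD.
Qed.
Canonical rq_pi_add_morph := PiMorph2 rq_pi_add.

Lemma rq_addA : associative rq_add.
Proof. by move=> x y z; rewrite -[x]reprK -[y]reprK -[z]reprK !piE addrA. Qed.
Lemma rq_addC : commutative rq_add.
Proof. by move=> x y; rewrite -[x]reprK -[y]reprK !piE addrC. Qed.
Lemma rq_add0 : left_id rq_zero rq_add.
Proof. by move=> x; rewrite -[x]reprK !piE add0r. Qed.
Lemma rq_addN : left_inverse rq_zero rq_opp rq_add.
Proof. by move=> x; rewrite -[x]reprK !piE addNr. Qed.

HB.instance Definition _ := GRing.isZmodule.Build rquot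
  rq_addA rq_addC rq_add0 rq_addN.

Definition rq_one : rquot := lift_cst rquot 1.
Definition rq_mul := lift_op2 rquot *%R.
Canonical rq_pi_one_morph := PiConst rq_one.

Lemma rq_pi_mul : {morph \pi_rquot : x y / x * y >-> rq_mul x y}.
Proof.
move=> x y; unlock rq_mul; apply/eqP; rewrite rq_equivE.
set x' := repr (\pi_rquot x); set y' := repr (\pi_rquot y).
have hx : x - x' \in tsI J by rewrite -rq_equivE /x' reprK.
have hy : y - y' \in tsI J by rewrite -rq_equivE /y' reprK.
have -> : x * y - x' * y' = (x - x') * y + x' * (y - y').
  by rewrite mulrBl mulrBr addrA addrNK.
by apply: rpredD; [apply: tsI_mulr | apply: tsI_mull].
Qed.
Canonical rq_pi_mul_morph := PiMorph2 rq_pi_mul.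

Lemma rq_mulA : associative rq_mul.
Proof. by move=> x y z; rewrite -[x]reprK -[y]reprK -[z]reprK !piE mulrA. Qed.
Lemma rq_mul1 : left_id rq_one rq_mul.
Proof. by move=> x; rewrite -[x]reprK !piE mul1r. Qed.
Lemma rq_mulr1 : right_id rq_one rq_mul.
Proof. by move=> x; rewrite -[x]reprK !piE mulr1. Qed.
Lemma rq_mulDl : left_distributive rq_mul +%R.
Proof.
move=> x y z; rewrite -[x]reprK -[y]reprK -[z]reprK.
by apply/eqP; rewrite piE /= mulrDl equiv_refl.
Qed.
Lemma rq_mulDr : right_distributive rq_mul +%R.
Proof.
move=> x y z; rewrite -[x]reprK -[y]reprK -[z]reprK.
by apply/eqP; rewrite piE /= mulrDr equiv_refl.
Qed.

HB.instance Definition _ := GRing.Zmodule_isPzRing.Build rquot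
  rq_mulA rq_mul1 rq_mulr1 rq_mulDl rq_mulDr.

Lemma rquot_piM (x y : R) : \pi_rquot (x * y) = \pi_rquot x * \pi_rquot y.
Proof. exact: rq_pi_mul. Qed.
End TwoSidedQuotient.

Definition is_unit (R : pzRingType) (u : R) : Prop :=
  exists v : R, u * v = 1 /\ v * u = 1.

Definition torsion_clean_with (R : pzRingType) (n : nat) : Prop :=
  forall r : R, exists e u : R,
    e * e = e /\ is_unit u /\ u ^+ n = 1 /\ r = e + u.

Definition n_torsion_clean (R : pzRingType) (n : nat) : Prop :=
  (0 < n)%N /\ torsion_clean_with R n /\
  forall m : nat, (0 < m)%N -> torsion_clean_with R m -> (n <= m)%N.

Definition finite_char (R : pzRingType) : Prop :=
  exists m : nat, (0 < m)%N /\ (m%:R : R) = 0.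

Definition nil_bounded_index (R : pzRingType) (J : tsIdeal R) : Prop :=
  exists k : nat, forall r : R, r \in tsI J -> r ^+ k = 0.

(* Torsion cleanness descends to R/J along the projection.  For the converse,
   let m%:R = 0 in R, r^K = 0 on J, and R/J be t-torsion clean, and write the
   image of r in R/J as E + U.  The map f(b) = 3b^2 - 2b^3 satisfies
   f(b)^2 - f(b) = (b^2 - b)^2 (4(b^2 - b) - 3), so iterating it squares the
   defect b^2 - b; starting from a lift a of E, whose defect lies in J, K
   iterations give an idempotent e lifting E.  Then u := r - e lifts U, so
   u^t = 1 + j with j in J, and (1 + j)^(m K!) = 1 because m divides
   C(m K!, i) for 0 < i < K.  Hence R is (t m K!)-torsion clean; in both
   directions a least exponent then exists by well-ordering. *)

From HB Require Import structures.
From mathcomp Require Import all_boot all_algebra generic_quotient.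
From mathcomp Require Import ring.
From Stdlib Require Import Classical.
Set Implicit Arguments. Unset Strict Implicit. Unset Printing Implicit Defensive.
Import GRing.Theory.
Local Open Scope ring_scope.
Local Open Scope quotient_scope.

Lemma exists_minimal_nat (P : nat -> Prop) :
  (exists n, P n) -> exists n, P n /\ forall m, P m -> (n <= m)%N.
Proof.
case=> n; elim/ltn_ind: n => n IH Pn.
have [[m Pm ltmn]|no_smaller] := classic (exists2 m, P m & (m < n)%N).
  exact: IH ltmn Pm.
exists n; split=> // m Pm; rewrite leqNgt; apply/negP => ltmn.
by apply: no_smaller; exists m.
Qed.

Lemma dvdn_bin_mul m n i : (0 < i)%N -> (i %| n)%N -> (m %| 'C(m * n, i))%N.
Proof.
case: i => // i _ /dvdnP[f ->].
suff -> : 'C(m * (f * i.+1), i.+1) = (m * (f * 'C((m * (f * i.+1)).-1, i)))%N.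
  exact: dvdn_mulr.
apply/eqP; rewrite -(eqn_pmul2l (ltn0Sn i)) -mul_bin_diag; apply/eqP.
set C := 'C(_, _).
by rewrite -!mulnA [in RHS]mulnCA [in RHS](mulnCA i.+1).
Qed.

Lemma exists_n_torsion_clean (R : pzRingType) :
  (exists n, (0 < n)%N /\ torsion_clean_with R n) -> exists n, n_torsion_clean R n.
Proof.
move/exists_minimal_nat => [n [[n_gt0 clean_n] n_min]].
by exists n; split=> //; split=> // m m_gt0 clean_m; apply: n_min.
Qed.

Lemma torsion_clean_with_rmorph (R S : pzRingType) (f : {rmorphism R -> S})
    (g : S -> R) n :
  cancel g f -> torsion_clean_with R n -> torsion_clean_with S n.
Proof.
move=> gK clean_R y; have [e [u [ee [[v [uv vu]] [un def_y]]]]] := clean_R (g y).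
exists (f e), (f u); split; first by rewrite -rmorphM ee.
split; first by exists (f v); rewrite -!rmorphM uv vu rmorph1.
by rewrite -rmorphXn un rmorph1 -rmorphD -def_y gK.
Qed.

Lemma unipotent_expr_char_fact (R : pzRingType) (j : R) m K :
  m%:R = 0 :> R -> j ^+ K = 0 -> (1 + j) ^+ (m * K`!) = 1.
Proof.
move=> char_m nil_j; rewrite addrC exprD1n big_ord_recl expr0 bin0 mulr1n.
rewrite big1 ?addr0 // => i _; rewrite lift0; move: (nat_of_ord i) => {}i.
have [/subnK <-|ltiK] := leqP K i.+1; first by rewrite exprD nil_j mulr0 mul0rn.
have /dvdnP[c ->] : (m %| 'C(m * K`!, i.+1))%N.
  by apply: dvdn_bin_mul => //; apply: dvdn_fact; apply: ltnW.
by rewrite mulrnA -mulr_natr char_m mulr0.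
Qed.

Lemma is_unit_expr_eq1 (R : pzRingType) (u : R) N :
  (0 < N)%N -> u ^+ N = 1 -> is_unit u.
Proof.
case: N => // N _ uN; exists (u ^+ N).
by rewrite -exprS -exprSr.
Qed.

Section QuotientMorphism.
Variables (R : pzRingType) (J : tsIdeal R).

Definition rq_pi : R -> rquot J := \pi_(rquot J).

Lemma rq_pi_is_zmod_morphism : zmod_morphism rq_pi.
Proof. by move=> x y; rewrite /rq_pi !piE. Qed.

Lemma rq_pi_is_monoid_morphism : monoid_morphism rq_pi.
Proof. by split=> [|x y]; rewrite /rq_pi ?piE. Qed.

HB.instance Definition _ :=
  GRing.isZmodMorphism.Build R (rquot J) rq_pi rq_pi_is_zmod_morphism.
HB.instance Definition _ :=
  GRing.isMonoidMorphism.Build R (rquot J) rq_pi rq_pi_is_monoid_morphism.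

Lemma rq_pi_eq0 x : (rq_pi x == 0) = (x \in tsI J).
Proof. by rewrite -(rmorph0 rq_pi) rq_equivE subr0. Qed.

Lemma rq_piK : cancel repr rq_pi.
Proof. exact: reprK. Qed.

End QuotientMorphism.

Fixpoint idem_iter (R : pzRingType) (a : R) (s : nat) : R :=
  if s is s'.+1 then let b := idem_iter a s' in 3 * b ^+ 2 - 2 * b ^+ 3 else a.

Lemma rmorph_idem_iter (R S : pzRingType) (f : {rmorphism R -> S}) a s :
  f (idem_iter a s) = idem_iter (f a) s.
Proof. by elim: s => //= s <-; rewrite rmorphB !rmorphM !rmorph_nat. Qed.

Lemma idem_iter_id (R : pzRingType) (e : R) s : e * e = e -> idem_iter e s = e.
Proof.
move=> ee; elim: s => //= s ->.
have eX n : e ^+ n.+1 = e by elim: n => // n IH; rewrite exprS IH.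
by rewrite !eX -mulrBl -natrB // mul1r.
Qed.

Lemma idem_iter_defect (C : comPzRingType) (x : C) s :
  exists c, let b := idem_iter x s in b * b - b = c * (x * x - x) ^+ (2 ^ s).
Proof.
elim: s => [|s [c IH]] /=; first by exists 1; rewrite mul1r.
set b := idem_iter x s in IH *.
exists (c ^+ 2 * (4 * (b * b - b) - 3)).
transitivity ((b * b - b) ^+ 2 * (4 * (b * b - b) - 3)); first by ring.
by rewrite IH expnSr exprM; ring.
Qed.

Section NonzeroRing.
Variables (R : nzRingType) (a : R) (K : nat).
Hypothesis defect_nil : (a * a - a) ^+ K = 0.

Local Notation eval_a := (horner_morph (fun n : int => commr_int a n)).

Lemma idem_iter_nz_idempotent :
  idem_iter a K * idem_iter a K = idem_iter a K.
Proof.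
have eval_X : eval_a 'X = a by exact: horner_morphX.
have [c defect] := idem_iter_defect ('X : {poly int}) K.
have eval_iter : eval_a (idem_iter 'X K) = idem_iter a K.
  by rewrite rmorph_idem_iter; congr idem_iter.
apply/eqP; rewrite -subr_eq0 -eval_iter -rmorphM -rmorphB /= defect.
rewrite rmorphM rmorphXn rmorphB rmorphM /= eval_X.
by rewrite -(subnK (ltnW (ltn_expl K (ltnSn 1)))) exprD defect_nil !mulr0.
Qed.

End NonzeroRing.

(* [horner_morph] needs a nonzero target ring, so outside the zero ring we work
   on a copy of R carrying an nzRingType structure.  The two pzRingType
   structures are equal only up to record eta, so [idem_iter] is transported
   between them by induction. *)
Section NonzeroAlias.
Variable R : pzRingType.
Definition nz_alias of (1 : R) != 0 : Type := R.
Variable R_nz : (1 : R) != 0.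
HB.instance Definition _ := GRing.PzRing.on (nz_alias R_nz).
HB.instance Definition _ := GRing.PzSemiRing_isNonZero.Build (nz_alias R_nz) R_nz.
End NonzeroAlias.

Lemma idem_iter_idempotent (R : pzRingType) (a : R) K :
  (a * a - a) ^+ K = 0 -> idem_iter a K * idem_iter a K = idem_iter a K.
Proof.
have [R0 _ | R_nz defect] := eqVneq (1 : R) 0.
  by rewrite -[LHS]mulr1 R0 mulr0 -[RHS]mulr1 R0 mulr0.
have alias_iter s : @idem_iter (nz_alias R_nz) a s = idem_iter a s.
  by elim: s => //= s ->.
by have := @idem_iter_nz_idempotent (nz_alias R_nz) a K defect; rewrite alias_iter.
Qed.

Section Lifting.
Variables (R : pzRingType) (J : tsIdeal R) (K : nat).
Hypothesis nil_J : forall r, r \in tsI J -> r ^+ K = 0.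

Lemma lift_idempotent (E : rquot J) :
  E * E = E -> exists2 e : R, e * e = e & rq_pi J e = E.
Proof.
move=> EE; pose a := repr E.
have a_defect : a * a - a \in tsI J.
  by rewrite -rq_pi_eq0 rmorphB rmorphM /= rq_piK EE subrr.
exists (idem_iter a K); first exact/idem_iter_idempotent/nil_J.
by rewrite rmorph_idem_iter /= rq_piK idem_iter_id.
Qed.

Lemma lift_torsion_unit m t (u : R) :
  m%:R = 0 :> R -> rq_pi J u ^+ t = 1 -> u ^+ (t * (m * K`!)) = 1.
Proof.
move=> char_m ut; have j_in : u ^+ t - 1 \in tsI J.
  by rewrite -rq_pi_eq0 rmorphB rmorphXn rmorph1 ut subrr.
by rewrite exprM -(addrNK 1 (u ^+ t)) addrC unipotent_expr_char_fact ?nil_J.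
Qed.

Lemma torsion_clean_lift m t :
  (0 < m)%N -> m%:R = 0 :> R -> (0 < t)%N ->
  torsion_clean_with (rquot J) t -> torsion_clean_with R (t * (m * K`!)).
Proof.
move=> m_gt0 char_m t_gt0 clean_quot r.
have [E [U [EE [_ [Ut def_r]]]]] := clean_quot (rq_pi J r).
have [e ee eE] := lift_idempotent EE.
have uU : rq_pi J (r - e) = U by rewrite rmorphB /= eE def_r addrAC subrr add0r.
have uN : (r - e) ^+ (t * (m * K`!)) = 1.
  by apply: lift_torsion_unit char_m _; rewrite uU.
exists e, (r - e); split=> //; split; last by rewrite addrCA subrr addr0.
by apply: is_unit_expr_eq1 uN; rewrite !muln_gt0 t_gt0 m_gt0 fact_gt0.
Qed.

End Lifting.

Theorem corollary2p12 (R : pzRingType) (J : tsIdeal R) :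
  finite_char R -> nil_bounded_index J ->
  ((exists n : nat, n_torsion_clean R n) <->
   (exists t : nat, n_torsion_clean (rquot J) t)).
Proof.
move=> [m [m_gt0 char_m]] [K nil_J].
split=> -[n [n_gt0 [clean_n _]]]; apply: exists_n_torsion_clean.
  by exists n; split=> //; exact: torsion_clean_with_rmorph (@rq_piK _ J) clean_n.
exists (n * (m * K`!))%N; split; first by rewrite !muln_gt0 n_gt0 m_gt0 fact_gt0.
exact: (torsion_clean_lift nil_J m_gt0 char_m n_gt0 clean_n).
Qed.
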